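(* Let $\mathcal P$ be a finite-dimensional Poisson $n$-Lie algebra. Then for all $i,j\in\mathbb N$, all $1\le k\le n$ and all $i_1,\dots,i_k\in\mathbb N$: $$\mathcal P^i\cdot\mathcal P^j\subseteq\mathcal P^{i+j},\qquad [\mathcal P^{i_1},\dots,\mathcal P^{i_k},\mathcal P,\dots,\mathcal P]\subseteq\mathcal P^{i_1+\cdots+i_k-k+2},$$ $$\mathcal P^{(i)}\subseteq\mathcal P^{2^{i-1}},\qquad (\mathcal P^{(i)})^{(j)}=\mathcal P^{(i+j-1)},$$ where in the second relation the bracket has $n-k$ arguments equal to $\mathcal P$.
   Context: A Poisson $n$-Lie algebra is a commutative associative algebra $(\mathcal P,\cdot)$ with an $n$-linear skew-symmetric bracket satisfying the fundamental identity $[x_1,\dots,x_{n-1},[y_1,\dots,y_n]]=\sum_{i=1}^n[y_1,\dots,[x_1,\dots,x_{n-1},y_i],\dots,y_n]$ and the Leibniz rule $[y\cdot z,x_2,\dots,x_n]=y\cdot[z,x_2,\dots,x_n]+z\cdot[y,x_2,\dots,x_n]$. For subspaces, $X\cdot Y$ and $[X_1,\dots,X_n]$ denote the linear spans of the corresponding products/brackets. An ideal $\mathcal I$ is a subspace with $\mathcal P\cdot\mathcal I\subseteq\mathcal I$ and $[\mathcal I,\mathcal P,\dots,\mathcal P]\subseteq\mathcal I$. For an ideal $\mathcal I$: $\mathcal I^{(1)}=\mathcal I$, $\mathcal I^{(k+1)}=[\mathcal I^{(k)},\mathcal I^{(k)},\mathcal P,\dots,\mathcal P]+\mathcal I^{(k)}\cdot\mathcal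 I^{(k)}$; $\mathcal I^1=\mathcal I$, $\mathcal I^{k+1}=[\mathcal I^k,\mathcal I,\mathcal P,\dots,\mathcal P]+\mathcal I^k\cdot\mathcal I$. These are ideals; in particular $(\mathcal P^{(i)})^{(j)}$ is the $j$-th derived term of the ideal $\mathcal P^{(i)}$. *)

From HB Require Import structures.
From mathcomp Require Import all_boot all_algebra.
Set Implicit Arguments. Unset Strict Implicit. Unset Printing Implicit Defensive.
Import GRing.Theory.
Local Open Scope ring_scope.

Section PoissonNLie.
Variables (K : fieldType) (V : vectType K) (n : nat).

Definition updn (x : 'I_n -> V) (k : nat) (z : V) : 'I_n -> V :=
  fun j => if nat_of_ord j == k then z else x j.

Definition swapa (x : 'I_n -> V) (i j : 'I_n) : 'I_n -> V :=
  fun t => if t == i then x j else if t == j then x i else x t.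

Definition is_poisson_nlie (mul : V -> V -> V) (br : ('I_n -> V) -> V) : Prop :=
      (forall (a : K) x y z, mul (a *: x + y) z = a *: mul x z + mul y z) /\
      (forall x y, mul x y = mul y x) /\
      (forall x y z, mul x (mul y z) = mul (mul x y) z) /\
      (forall (x : 'I_n -> V) (k : 'I_n) (a : K) u v,
          br (updn x k (a *: u + v)) = a *: br (updn x k u) + br (updn x k v)) /\
      (forall (x : 'I_n -> V) (i j : 'I_n), i != j -> br (swapa x i j) = - br x) /\
      (forall x y : 'I_n -> V,
          br (updn x n.-1 (br y)) =
          \sum_(i < n) br (updn y i (br (updn x n.-1 (y i))))) /\
      (forall (x : 'I_n -> V) y z,
          br (updn x 0 (mul y z)) = mul y (br (updn x 0 z)) + mul z (br (updn x 0 y))).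

Variables (mul : V -> V -> V) (br : ('I_n -> V) -> V).

(* X . Y : span of all products x . y (spanned by products of basis vectors,
   as for prodv in falgebra.v) *)
Definition prodsp (X Y : {vspace V}) : {vspace V} :=
  <<[seq mul x y | x <- vbasis X, y <- vbasis Y]>>%VS.

(* [X_1, ..., X_n] : span of all brackets [x_1, ..., x_n], x_i in X_i,
   spanned by brackets of basis vectors (indices beyond \dim X_i give the
   zero vector, whose bracket is 0 by multilinearity). *)
Definition brsp (Xs : 'I_n -> {vspace V}) : {vspace V} :=
  <<[seq br (fun i => (vbasis (Xs i))`_(f i))
     | f : {ffun 'I_n -> 'I_(\dim (fullv : {vspace V}))}]>>%VS.

Definition brsp2 (A B : {vspace V}) : {vspace V} :=
  brsp (fun i : 'I_n => if nat_of_ord i == 0%N then A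
                        else if nat_of_ord i == 1%N then B else fullv).

(* lower central series: lcs_aux I m = I^(m+1) *)
Fixpoint lcs_aux (I : {vspace V}) (m : nat) : {vspace V} :=
  match m with
  | 0 => I
  | m'.+1 => (brsp2 (lcs_aux I m') I + prodsp (lcs_aux I m') I)%VS
  end.
(* I^k for k >= 1 (I^0 is set to I, unused) *)
Definition lpow (I : {vspace V}) (k : nat) : {vspace V} := lcs_aux I k.-1.

(* derived series: der_aux I m = I^(m+1) *)
Fixpoint der_aux (I : {vspace V}) (m : nat) : {vspace V} :=
  match m with
  | 0 => I
  | m'.+1 => (brsp2 (der_aux I m') (der_aux I m') + prodsp (der_aux I m') (der_aux I m'))%VS
  end.
(* I^(k) for k >= 1 *)
Definition dpow (I : {vspace V}) (k : nat) : {vspace V} := der_aux I k.-1.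

End PoissonNLie.

From HB Require Import structures.
From mathcomp Require Import all_boot all_algebra.
From mathcomp Require Import zify.
From Stdlib Require Import FunctionalExtensionality.
Import GRing.Theory.
Local Open Scope ring_scope.

Set Implicit Arguments. Unset Strict Implicit. Unset Printing Implicit Defensive.

(* By skew-symmetry, the Leibniz rule and the fundamental identity hold in
   every argument position, and P^(m+1) is spanned by brackets with one
   argument in P^m and by products w.p with w in P^m.  Expanding an argument
   of P^(b+1) in this way and using the two identities shows, by induction on
   b, that raising one argument of a bracket from P to P^(b+1) raises its
   level by b (and the Leibniz rule alone gives P^a.P^b <= P^(a+b)); the
   bracket estimate follows argument by argument, and the derived series
   estimate by induction since 2^i + 2^i = 2^(i+1). *)

Section LinearSpan.
Variables (K : fieldType) (V : vectType K) (h : V -> V).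
Hypothesis h_linear : linear h.

HB.instance Definition _ := GRing.isLinear.Build K V V *:%R h h_linear.

Lemma linear_span_sub (G : seq V) (S : {vspace V}) :
  {in G, forall g, h g \in S} -> forall z, z \in <<G>>%VS -> h z \in S.
Proof.
move=> hG z; rewrite -(lfunE h) memv_preim; apply/subvP: z.
by apply/span_subvP => g /hG; rewrite -(lfunE h) memv_preim.
Qed.

Lemma linear_funD u v : h (u + v) = h u + h v. Proof. exact: raddfD. Qed.

Lemma linear_funN u : h (- u) = - h u. Proof. exact: raddfN. Qed.

End LinearSpan.

Section ArgumentUpdate.
Variables (K : fieldType) (V : vectType K) (n : nat).
Implicit Types (x : 'I_n -> V) (i j k : 'I_n).

Lemma updn_eq x k z : updn x k z k = z.
Proof. by rewrite /updn eqxx. Qed.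

Lemma updn_ne x k j z : j != k -> updn x k z j = x j.
Proof. by move=> /negbTE jk; rewrite /updn -[_ == _]/(j == k) jk. Qed.

Lemma updn_id x k : updn x k (x k) = x.
Proof.
by apply: functional_extensionality => j; rewrite /updn; case: eqP => // /ord_inj ->.
Qed.

Lemma updn_updn x k z w : updn (updn x k z) k w = updn x k w.
Proof. by apply: functional_extensionality => j; rewrite /updn; case: eqP. Qed.

Lemma updn_swapa x i j w : updn (swapa x i j) i w = swapa (updn x j w) i j.
Proof.
apply: functional_extensionality => t.
have [->|ti] := eqVneq t i; first by rewrite updn_eq /swapa eqxx updn_eq.
rewrite updn_ne // /swapa (negbTE ti).
by have [tj|tj] := eqVneq t j; rewrite updn_ne // -tj eq_sym.
Qed.

End ArgumentUpdate.

Lemma der_auxD (K : fieldType) (V : vectType K) (n : nat)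
    (mul : V -> V -> V) (br : ('I_n -> V) -> V) (I : {vspace V}) a b :
  der_aux mul br (der_aux mul br I a) b = der_aux mul br I (a + b).
Proof. by elim: b => [|b IH] /=; rewrite ?addn0 // IH addnS. Qed.

Section PoissonLowerCentralSeries.
Variables (K : fieldType) (V : vectType K) (n : nat).
Variables (mul : V -> V -> V) (br : ('I_n -> V) -> V).
Hypothesis n_ge2 : (2 <= n)%N.
Hypothesis mul_linear_l :
  forall (a : K) x y z, mul (a *: x + y) z = a *: mul x z + mul y z.
Hypothesis mul_comm : forall x y, mul x y = mul y x.
Hypothesis mul_assoc : forall x y z, mul x (mul y z) = mul (mul x y) z.
Hypothesis br_linear : forall (x : 'I_n -> V) (k : 'I_n),
  linear (fun z => br (updn x k z)).
Hypothesis br_skew :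
  forall (x : 'I_n -> V) (i j : 'I_n), i != j -> br (swapa x i j) = - br x.
Hypothesis br_fundamental : forall x y : 'I_n -> V,
  br (updn x n.-1 (br y)) = \sum_(i < n) br (updn y i (br (updn x n.-1 (y i)))).
Hypothesis br_leibniz : forall (x : 'I_n -> V) y z,
  br (updn x 0 (mul y z)) = mul y (br (updn x 0 z)) + mul z (br (updn x 0 y)).

Local Notation P := (fullv : {vspace V}).
Local Notation lcs := (lpow mul br P).

Let arg0 : 'I_n := Ordinal (ltnW n_ge2).
Let arg1 : 'I_n := Ordinal n_ge2.
Let arg_last : 'I_n := Ordinal (eq_leq (prednK (ltnW n_ge2))).

Lemma mul_linear_r x : linear (mul x).
Proof. by move=> a u v; rewrite mul_comm mul_linear_l !(mul_comm _ x). Qed.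

Lemma br_updn_swap (i j : 'I_n) (x : 'I_n -> V) w :
  i != j -> br (updn x j w) = - br (updn (swapa x i j) i w).
Proof. by move=> ij; rewrite updn_swapa br_skew ?opprK. Qed.

Lemma br_leibniz_at (x : 'I_n -> V) (j : 'I_n) y z :
  br (updn x j (mul y z)) = mul y (br (updn x j z)) + mul z (br (updn x j y)).
Proof.
have [->|j0] := eqVneq j arg0; first exact: br_leibniz.
rewrite eq_sym in j0; rewrite !(br_updn_swap _ _ j0) br_leibniz.
by rewrite !(linear_funN (mul_linear_r _)) opprD.
Qed.

Lemma br_fundamental_at (x : 'I_n -> V) (j : 'I_n) y :
  br (updn x j (br y)) = \sum_(i < n) br (updn y i (br (updn x j (y i)))).
Proof.
have [->|jl] := eqVneq j arg_last; first exact: br_fundamental.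
rewrite eq_sym in jl; rewrite (br_updn_swap _ _ jl) br_fundamental -sumrN.
apply: eq_bigr => i _; rewrite (br_updn_swap x (y i) jl).
by rewrite (linear_funN (br_linear y i)).
Qed.

Lemma mem_brsp (Xs : 'I_n -> {vspace V}) (x : 'I_n -> V) :
  (forall i, x i \in Xs i) -> br x \in brsp br Xs.
Proof.
have basis_br (y : 'I_n -> V) :
    (forall i, y i \in vbasis (Xs i)) -> br y \in brsp br Xs.
  move=> hy; apply/memv_span/mapP.
  have lt_index i : (index (y i) (vbasis (Xs i)) < \dim P)%N.
    rewrite (leq_trans _ (dimvS (subvf (Xs i)))) //.
    by rewrite -[X in (_ < X)%N](size_tuple (vbasis (Xs i))) index_mem.
  exists [ffun i => Ordinal (lt_index i)]; first by rewrite mem_enum.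
  by congr br; apply: functional_extensionality => i; rewrite ffunE nth_index.
suff expand m : (m <= n)%N -> forall y : 'I_n -> V,
    (forall i : 'I_n, (i < m)%N -> y i \in Xs i) ->
    (forall i : 'I_n, (m <= i)%N -> y i \in vbasis (Xs i)) ->
    br y \in brsp br Xs.
  by move=> hx; apply: (expand n) => // i; rewrite leqNgt ltn_ord.
elim: m => [_ y _ hy|m IH lt_mn y hXs hB]; first by apply: basis_br => i; apply: hy.
pose k : 'I_n := Ordinal lt_mn.
have yk : y k \in <<vbasis (Xs k)>>%VS by rewrite (span_basis (vbasisP _)) hXs.
rewrite -(updn_id y k); apply: (linear_span_sub (br_linear y k) _ yk) => g g_basis.
apply: IH => [|i lt_im|i le_mi]; first exact: ltnW.
  have ik : i != k by rewrite -val_eqE /= neq_ltn lt_im.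
  by rewrite updn_ne // hXs // ltnW.
have [->|ik] := eqVneq i k; first by rewrite updn_eq.
rewrite updn_ne // hB // ltn_neqAle le_mi andbT.
by move: ik; rewrite -val_eqE eq_sym.
Qed.

Lemma brsp_linear_sub h (Xs : 'I_n -> {vspace V}) (S : {vspace V}) :
  linear h -> (forall x, (forall i, x i \in Xs i) -> h (br x) \in S) ->
  forall z, z \in brsp br Xs -> h z \in S.
Proof.
move=> hL hbr; apply: linear_span_sub => // _ /mapP [f _ ->]; apply: hbr => i.
have [lt_fi|ge_fi] := ltnP (f i) (size (vbasis (Xs i))).
  exact/vbasis_mem/mem_nth.
by rewrite nth_default ?mem0v.
Qed.

Lemma brsp_sub (Xs : 'I_n -> {vspace V}) (S : {vspace V}) :
  (forall x, (forall i, x i \in Xs i) -> br x \in S) -> (brsp br Xs <= S)%VS.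
Proof. by move=> hbr; apply/subvP; apply: (brsp_linear_sub (h := id)). Qed.

Lemma mem_prodsp (X Y : {vspace V}) x y :
  x \in X -> y \in Y -> mul x y \in prodsp mul X Y.
Proof.
rewrite -{1}(span_basis (vbasisP X)) -{1}(span_basis (vbasisP Y)) => hx hy.
apply: (linear_span_sub (h := mul^~ y) _ _ hx) => [a u v|g g_basis].
  exact: mul_linear_l.
apply: (linear_span_sub (mul_linear_r g) _ hy) => g' g'_basis.
exact/memv_span/allpairs_f.
Qed.

Lemma prodsp_linear_sub h (X Y S : {vspace V}) :
  linear h -> (forall x y, x \in X -> y \in Y -> h (mul x y) \in S) ->
  forall z, z \in prodsp mul X Y -> h z \in S.
Proof.
move=> hL hmul; apply: linear_span_sub => // _ /allpairsP [[x y] /= [hx hy ->]].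
by apply: hmul; apply: vbasis_mem.
Qed.

Lemma prodsp_sub (X Y S : {vspace V}) :
  (forall x y, x \in X -> y \in Y -> mul x y \in S) -> (prodsp mul X Y <= S)%VS.
Proof. by move=> hmul; apply/subvP; apply: (prodsp_linear_sub (h := id)). Qed.

Lemma lcs_succ m :
  (0 < m)%N -> lcs m.+1 = (brsp2 br (lcs m) P + prodsp mul (lcs m) P)%VS.
Proof. by case: m. Qed.

Lemma lcs_succ_ind h m (S : {vspace V}) : linear h -> (0 < m)%N ->
  (forall x, x arg0 \in lcs m -> h (br x) \in S) ->
  (forall w p, w \in lcs m -> h (mul w p) \in S) ->
  forall z, z \in lcs m.+1 -> h z \in S.
Proof.
move=> hL m_gt0 hbr hmul z; rewrite lcs_succ // => /memv_addP [u hu [w hw ->]].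
rewrite linear_funD //; apply: memvD.
  by apply: (brsp_linear_sub hL _ hu) => x /(_ arg0) /hbr.
by apply: (prodsp_linear_sub hL _ hw) => w' p /hmul.
Qed.

Lemma br_mem_lcs_succ m (x : 'I_n -> V) j :
  (0 < m)%N -> x j \in lcs m -> br x \in lcs m.+1.
Proof.
move=> m_gt0 hxj; rewrite lcs_succ //; apply: (subvP (addvSl _ _)).
have mem_br (y : 'I_n -> V) : y arg0 \in lcs m -> br y \in brsp2 br (lcs m) P.
  move=> hy; apply: mem_brsp => i; case: ifP => [/eqP i0|_].
    by rewrite (_ : i = arg0) //; apply: val_inj.
  by case: ifP => _; apply: memvf.
have [e|j0] := eqVneq arg0 j; first by apply: mem_br; rewrite e.
by rewrite -(updn_id x j) (br_updn_swap _ _ j0) memvN mem_br // updn_eq.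
Qed.

Lemma mul_mem_lcs_succ m w p : (0 < m)%N -> w \in lcs m -> mul w p \in lcs m.+1.
Proof.
move=> m_gt0 hw; rewrite lcs_succ //; apply: (subvP (addvSr _ _)).
exact: mem_prodsp (memvf p).
Qed.

Lemma br_mem_lcs2 (x : 'I_n -> V) : br x \in lcs 2.
Proof. exact: (br_mem_lcs_succ (m := 1) (j := arg0) isT (memvf _)). Qed.

Lemma mul_mem_lcs a b x y : (0 < a)%N -> (0 < b)%N ->
  x \in lcs a -> y \in lcs b -> mul x y \in lcs (a + b).
Proof.
move=> a_gt0; case: b => // b _; elim: b a x y a_gt0 => [|b IH] a x y a_gt0 hx.
  by rewrite addn1 => _; apply: mul_mem_lcs_succ.
apply: (lcs_succ_ind (mul_linear_r x)) => // [z hz|w p hw].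
  (* Leibniz solved for x.[z]:  x.[z] = [x.z_0, z_1, ...] - z_0.[x, z_1, ...]. *)
  have := br_leibniz_at z arg0 x (z arg0); rewrite updn_id => leib.
  rewrite -[mul x _](addrK (mul (z arg0) (br (updn z arg0 x)))) -leib.
  apply: memvB.
    rewrite addnS; apply: (br_mem_lcs_succ (j := arg0)).
      by rewrite addn_gt0 a_gt0.
    by rewrite updn_eq; apply: IH.
  rewrite mul_comm -addSnnS; apply: IH => //.
  by apply: (br_mem_lcs_succ (j := arg0)); rewrite ?updn_eq.
rewrite mul_assoc addnS; apply: mul_mem_lcs_succ; last exact: IH.
by rewrite addn_gt0 a_gt0.
Qed.

Lemma br_mem_lcs_raise b c (x : 'I_n -> V) t : (0 < c)%N ->
  x t \in lcs b.+1 -> (forall w, br (updn x t w) \in lcs c) ->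
  br x \in lcs (c + b).
Proof.
elim: b c x t => [|b IH] c x t c_gt0 hxt hc.
  by rewrite addn0 -(updn_id x t); apply: hc.
have -> : br x = (fun z => br (updn x t z)) (x t) by rewrite updn_id.
apply: (lcs_succ_ind (br_linear x t) _ _ _ hxt) => // [y hy|w p hw].
  rewrite br_fundamental_at; apply: memv_suml => i _.
  have [->|i0] := eqVneq i arg0.
    rewrite addnS; apply: (br_mem_lcs_succ (j := arg0)).
      by rewrite addn_gt0 c_gt0.
    by rewrite updn_eq; apply: (IH _ _ t) => // [|w]; rewrite ?updn_eq ?updn_updn.
  (* Here [x, y_i] has level c and sits at position i, so raise y_0 instead. *)
  rewrite -addSnnS; apply: (IH _ _ arg0) => // [|w].
    by rewrite updn_ne // eq_sym.
  by apply: (br_mem_lcs_succ (j := i)); rewrite // updn_ne // updn_eq.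
rewrite br_leibniz_at; apply: memvD; first by rewrite mul_comm; apply: mul_mem_lcs.
rewrite mul_comm addnS; apply: mul_mem_lcs_succ; first by rewrite addn_gt0 c_gt0.
by apply: (IH _ _ t) => // [|w']; rewrite ?updn_eq ?updn_updn.
Qed.

Lemma br_mem_lcs_add a b (x : 'I_n -> V) s t : s != t -> (0 < a)%N -> (0 < b)%N ->
  x s \in lcs a -> x t \in lcs b -> br x \in lcs (a + b).
Proof.
case: b => // b st a_gt0 _ hxs hxt; rewrite -addSnnS.
apply: (br_mem_lcs_raise (t := t)) => // w.
by apply: (br_mem_lcs_succ (j := s)); rewrite ?updn_ne.
Qed.

Lemma br_mem_lcs_sum k (d : nat -> nat) (x : 'I_n -> V) : (k <= n)%N ->
  (forall l, (l < k)%N -> (0 < d l)%N) ->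
  (forall t : 'I_n, (t < k)%N -> x t \in lcs (d t)) ->
  br x \in lcs (\sum_(l < k) d l + 2 - k).
Proof.
elim: k x => [|k IH] x lt_kn d_gt0 hx; first by rewrite big_ord0 br_mem_lcs2.
pose t : 'I_n := Ordinal lt_kn.
have ge_sum : (k <= \sum_(l < k) d l)%N.
  rewrite -[X in (X <= _)%N]card_ord -sum1_card leq_sum // => l _.
  by apply: d_gt0; rewrite ltnS ltnW.
have [b db] : exists b, d k = b.+1 by exists (d k).-1; rewrite prednK ?d_gt0.
rewrite big_ord_recr /= db.
have -> : (\sum_(l < k) d l + b.+1 + 2 - k.+1 = \sum_(l < k) d l + 2 - k + b)%N.
  by lia.
apply: (br_mem_lcs_raise (t := t)); first by lia.
  by rewrite -db; apply: hx.
move=> w; apply: IH => [|l lt_lk|i lt_ik]; first exact: ltnW.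
  by apply: d_gt0; rewrite ltnS ltnW.
have it : i != t by rewrite -val_eqE /= neq_ltn lt_ik.
by rewrite updn_ne // hx // ltnS ltnW.
Qed.

Lemma der_sub_lcs m : (der_aux mul br P m <= lcs (2 ^ m))%VS.
Proof.
elim: m => [|m IH] /=; first exact: subvv.
have pow_gt0 : (0 < 2 ^ m)%N by rewrite expn_gt0.
rewrite subv_add expnS mul2n -addnn; apply/andP; split.
  apply: brsp_sub => x hx.
  by apply: (br_mem_lcs_add (s := arg0) (t := arg1)); rewrite // (subvP IH) ?hx.
by apply: prodsp_sub => x y hx hy; apply: mul_mem_lcs; rewrite // (subvP IH).
Qed.

End PoissonLowerCentralSeries.

Theorem lemma5p2 (K : fieldType) (V : vectType K) (n : nat)
    (mul : V -> V -> V) (br : ('I_n -> V) -> V) :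
  (2 <= n)%N -> is_poisson_nlie mul br ->
  let P := (fullv : {vspace V}) in
  [/\ (forall i j : nat, (0 < i)%N -> (0 < j)%N ->
         (prodsp mul (lpow mul br P i) (lpow mul br P j)
            <= lpow mul br P (i + j))%VS),
      (forall (k : nat) (is_ : nat -> nat), (1 <= k <= n)%N ->
         (forall l, (l < k)%N -> (0 < is_ l)%N) ->
         (brsp br (fun t : 'I_n => if (nat_of_ord t < k)%N
                                   then lpow mul br P (is_ (nat_of_ord t)) else P)
            <= lpow mul br P ((\sum_(l < k) is_ l) + 2 - k))%VS),
      (forall i : nat, (0 < i)%N ->
         (dpow mul br P i <= lpow mul br P (2 ^ (i - 1)))%VS) &
      (forall i j : nat, (0 < i)%N -> (0 < j)%N ->
         dpow mul br (dpow mul br P i) j = dpow mul br P (i + j - 1))].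
Proof.
move=> n_ge2 [mul_linear_l [mul_comm [mul_assoc [br_linear [br_skew]]]]].
move=> [br_fundamental br_leibniz] P.
split=> [i j i_gt0 j_gt0|k d /andP[_ le_kn] d_gt0|[//|i] _|[//|i] [//|j] _ _].
- by apply: prodsp_sub => // x y hx hy; apply: mul_mem_lcs.
- apply: brsp_sub => // x hx; apply: br_mem_lcs_sum => // t lt_tk.
  by have := hx t; rewrite lt_tk.
- by rewrite subn1; apply: der_sub_lcs.
- by rewrite /dpow /= der_auxD; congr der_aux; lia.
Qed.
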